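(* Let $\mathbf{x}_1,\ldots,\mathbf{x}_n\in\mathbb{R}^d$ be nonzero column vectors and $y_1,\ldots,y_n\in\mathbb{R}$. Let $\mathbf{T}\in\mathbb{R}^{n\times n}$ be the upper triangular matrix with $\mathbf{T}_{ik}=\mathbf{x}_i^\top\mathbf{x}_k$ for $i\le k$ and $0$ otherwise, let $\mathbf{a}^*=(a_1^*,\ldots,a_n^* )$ be the unique row vector with $(y_1,\ldots,y_n)=\mathbf{a}^*\mathbf{T}$, and set $\mathbf{w}_j^*=\sum_{i=1}^j a_i^*\mathbf{x}_i^\top\in\mathbb{R}^{1\times d}$ for $j=1,\ldots,n$. For $j=1,\ldots,n-1$ define the online loss $L_j(\mathbf{w})=\frac12(\mathbf{w}\mathbf{x}_{j+1}-y_{j+1})^2$, with gradient $\nabla_{\mathbf{w}}L_j(\mathbf{w})=(\mathbf{w}\mathbf{x}_{j+1}-y_{j+1})\mathbf{x}_{j+1}^\top$. Then for every $j=1,\ldots,n-1$, $$\mathbf{w}_{j+1}^*=\mathbf{w}_j^*-\frac{1}{\|\mathbf{x}_{j+1}\|_2^2}\nabla_{\mathbf{w}}L_j(\mathbf{w}_j^* ).$$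
   Context: Weight vectors are $1\times d$ row vectors and inputs are $d\times 1$ column vectors. The vectors $\mathbf{w}_j^*$ are the stationary points of the per-position weight iteration $\mathbf{w}_j^{(l)}=\mathbf{w}_j^{(l-1)}+\frac{\eta}{n}\sum_{i=1}^j(y_i-\mathbf{w}_i^{(l-1)}\mathbf{x}_i)\mathbf{x}_i^\top$ (with $\mathbf{w}_j^{(0)}=0$) associated with a multi-layer causal linear self-attention in-context learner. *)

From mathcomp Require Import all_boot all_order all_algebra.
Set Implicit Arguments. Unset Strict Implicit. Unset Printing Implicit Defensive.
Import Order.TTheory GRing.Theory Num.Theory.
Local Open Scope ring_scope.

(* Vectors x_i in R^d are columns 'cV[R]_d; weights are rows 'rV[R]_d.
   Indices 1..n of the paper are the ordinals 'I_n (0-based). *)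

Definition dotc (R : realFieldType) (d : nat) (u v : 'cV[R]_d) : R :=
  (u^T *m v) ord0 ord0.

Definition Tmat (R : realFieldType) (n d : nat) (x : 'I_n -> 'cV[R]_d) : 'M[R]_n :=
  \matrix_(i < n, k < n) (if (i <= k)%N then dotc (x i) (x k) else 0).

Definition yrow (R : realFieldType) (n : nat) (y : 'I_n -> R) : 'rV[R]_n :=
  \row_(i < n) y i.

Definition wstar (R : realFieldType) (n d : nat) (x : 'I_n -> 'cV[R]_d)
    (a : 'rV[R]_n) (j : 'I_n) : 'rV[R]_d :=
  \sum_(i < n | (i <= j)%N) a ord0 i *: (x i)^T.

Definition online_loss (R : realFieldType) (d : nat) (xn : 'cV[R]_d) (yn : R)
    (w : 'rV[R]_d) : R :=
  2^-1 * ((w *m xn) ord0 ord0 - yn) ^+ 2.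

Definition online_grad (R : realFieldType) (d : nat) (xn : 'cV[R]_d) (yn : R)
    (w : 'rV[R]_d) : 'rV[R]_d :=
  ((w *m xn) ord0 ord0 - yn) *: xn^T.

(* The linear system [y = a* T] says precisely that each [w_k*]
   interpolates its own data point, [w_k* x_k = y_k].  Since
   [w_(j+1)* = w_j* + a*_(j+1) x_(j+1)^T], the coefficient [a*_(j+1)] is the
   one making this update interpolate [(x_(j+1), y_(j+1))], and that update is
   exactly the gradient step on [L_j] with step size [1 / |x_(j+1)|^2]. *)
From mathcomp Require Import all_boot all_order all_algebra.
Set Implicit Arguments. Unset Strict Implicit. Unset Printing Implicit Defensive.
Import Order.TTheory GRing.Theory Num.Theory.
Local Open Scope ring_scope.

Section Interpolation.
Variable R : realFieldType.

Lemma dotcc_eq0 d (u : 'cV[R]_d) : (dotc u u == 0) = (u == 0).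
Proof.
have sq k : u^T ord0 k * u k ord0 = u k ord0 ^+ 2 by rewrite mxE expr2.
rewrite /dotc mxE psumr_eq0 => [|k _]; last by rewrite /= sq sqr_ge0.
apply/allP/eqP => [u0 | -> k _]; last by rewrite /= !mxE mulr0.
apply/matrixP => k l; rewrite (ord1 l) mxE.
by apply/eqP; rewrite -sqrf_eq0 -sq; exact: u0 (mem_index_enum k).
Qed.

Lemma scale_trmx_mulmx d (alpha : R) (u v : 'cV[R]_d) :
  ((alpha *: u^T) *m v) ord0 ord0 = alpha * dotc u v.
Proof. by rewrite -scalemxAl mxE. Qed.

Lemma interpolating_step_is_grad_step d (xn : 'cV[R]_d) yn w (alpha : R) :
  xn != 0 -> ((w + alpha *: xn^T) *m xn) ord0 ord0 = yn ->
  w + alpha *: xn^T = w - (dotc xn xn)^-1 *: online_grad xn yn w.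
Proof.
rewrite -dotcc_eq0 => xn_nz <-.
rewrite /online_grad mulmxDl [(_ + _ : 'M_1) ord0 ord0]mxE scale_trmx_mulmx scalerA.
by rewrite opprD addrA subrr add0r mulrN mulrCA mulVf // mulr1 scaleNr opprK.
Qed.

Variables (n d : nat) (x : 'I_n -> 'cV[R]_d) (a : 'rV[R]_n).

Lemma mulmx_Tmat k : (a *m Tmat x) ord0 k = (wstar x a k *m x k) ord0 ord0.
Proof.
rewrite mxE /wstar mulmx_suml summxE [RHS]big_mkcond /=.
apply: eq_bigr => i _; rewrite mxE.
by case: ifP => _; rewrite ?mulr0 // scale_trmx_mulmx.
Qed.

Lemma wstarS (j j1 : 'I_n) : val j1 = (val j).+1 ->
  wstar x a j1 = wstar x a j + a ord0 j1 *: (x j1)^T.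
Proof.
move=> j1E; rewrite /wstar (bigD1 j1) //= addrC; congr (_ + _).
by apply: eq_bigl => i; rewrite andbC -val_eqE /= -ltn_neqAle j1E ltnS.
Qed.

End Interpolation.

Theorem proposition5 (R : realFieldType) (n d : nat)
    (x : 'I_n -> 'cV[R]_d) (y : 'I_n -> R) (astar : 'rV[R]_n) :
  (forall i, x i != 0) ->
  yrow y = astar *m Tmat x ->
  forall j j1 : 'I_n, val j1 = (val j).+1 ->
    wstar x astar j1 =
      wstar x astar j - (dotc (x j1) (x j1))^-1 *:
        online_grad (x j1) (y j1) (wstar x astar j).
Proof.
move=> x_nz yE j j1 j1E.
have interp k : (wstar x astar k *m x k) ord0 ord0 = y k.
  by rewrite -mulmx_Tmat -yE mxE.
rewrite (wstarS x astar j1E); apply: interpolating_step_is_grad_step => //.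
by rewrite -(wstarS x astar j1E) interp.
Qed.
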